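(* Every BL-chain $\mathbf A$ can be isomorphically embedded into a saturated BL-chain $\overline{\mathbf A}$ (identify $\mathbf A$ with its image) such that: (1) every element of $\overline{A}\setminus A$ is idempotent; and (2) if $C\subseteq A$ is such that $\bigwedge^{\mathbf A}C$ exists and is idempotent, then $\bigwedge^{\overline{\mathbf A}}C$ exists and $\bigwedge^{\mathbf A}C=\bigwedge^{\overline{\mathbf A}}C$; likewise, if $\bigvee^{\mathbf A}C$ exists and is idempotent, then $\bigvee^{\overline{\mathbf A}}C$ exists and $\bigvee^{\mathbf A}C=\bigvee^{\overline{\mathbf A}}C$.
   Context: A BL-algebra is an algebra $(A,\cdot,\to,\wedge,\vee,0,1)$ such that $(A,\wedge,\vee,0,1)$ is a bounded lattice, $(A,\cdot,1)$ is a commutative monoid, $x\cdot y\le z$ iff $x\le y\to z$, $x\wedge y=x\cdot(x\to y)$ and $(x\to y)\vee(y\to x)=1$; a BL-chain is a totally ordered BL-algebra. An element $a$ is idempotent if $a\cdot a=a$. A pair $(X,Y)$ of subsets of a BL-chain $A$ is a cut if $X\cup Y=A$, $x\le y$ for all $x\in X$, $y\in Y$, $Y$ is closed under $\cdot$, and $x\cdot y=x$ for all $x\in X$, $y\in Y$. A cut $(X,Y)$ is saturated if there is an idempotent $u\in A$ with $x\le u\le y$ for all $x\in X$, $y\in Y$. A BL-chain is saturated if every cut in it is saturated. $\bigwedge^{\mathbf A}C$, $\bigvee^{\mathbf A}C$ denote infimum and supremum computed in $\mathbf A$. *)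

From Stdlib Require Import Classical.

Record BLAlgebra := {
  car :> Type;
  bmul : car -> car -> car;
  bimp : car -> car -> car;
  bmeet : car -> car -> car;
  bjoin : car -> car -> car;
  bzero : car;
  bone : car;
  meet_comm : forall x y, bmeet x y = bmeet y x;
  join_comm : forall x y, bjoin x y = bjoin y x;
  meet_assoc : forall x y z, bmeet x (bmeet y z) = bmeet (bmeet x y) z;
  join_assoc : forall x y z, bjoin x (bjoin y z) = bjoin (bjoin x y) z;
  meet_absorb : forall x y, bmeet x (bjoin x y) = x;
  join_absorb : forall x y, bjoin x (bmeet x y) = x;
  meet_zero : forall x, bmeet bzero x = bzero;
  meet_one : forall x, bmeet bone x = x;
  mul_comm : forall x y, bmul x y = bmul y x;
  mul_assoc : forall x y z, bmul x (bmul y z) = bmul (bmul x y) z;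
  mul_one : forall x, bmul x bone = x;
  (* residuation, w.r.t. the lattice order x <= y :<-> x /\ y = x *)
  residuation : forall x y z,
      bmeet (bmul x y) z = bmul x y <-> bmeet x (bimp y z) = x;
  divisibility : forall x y, bmeet x y = bmul x (bimp x y);
  prelinearity : forall x y, bjoin (bimp x y) (bimp y x) = bone
}.

Section Notions.
Variable A : BLAlgebra.

Definition ble (x y : A) : Prop := bmeet A x y = x.

Definition is_chain : Prop := forall x y : A, ble x y \/ ble y x.

Definition idempotent (a : A) : Prop := bmul A a a = a.

Definition is_cut (X Y : A -> Prop) : Prop :=
  (forall a : A, X a \/ Y a) /\
  (forall x y : A, X x -> Y y -> ble x y) /\
  (forall y1 y2 : A, Y y1 -> Y y2 -> Y (bmul A y1 y2)) /\
  (forall x y : A, X x -> Y y -> bmul A x y = x).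

Definition saturated_cut (X Y : A -> Prop) : Prop :=
  exists u : A, idempotent u /\
    (forall x, X x -> ble x u) /\ (forall y, Y y -> ble u y).

Definition saturated : Prop :=
  forall X Y : A -> Prop, is_cut X Y -> saturated_cut X Y.

Definition is_inf (C : A -> Prop) (m : A) : Prop :=
  (forall c, C c -> ble m c) /\ (forall l, (forall c, C c -> ble l c) -> ble l m).
Definition is_sup (C : A -> Prop) (m : A) : Prop :=
  (forall c, C c -> ble c m) /\ (forall u, (forall c, C c -> ble c u) -> ble m u).
End Notions.

Definition BL_embedding (A B : BLAlgebra) (f : A -> B) : Prop :=
  (forall x y, f x = f y -> x = y) /\
  (forall x y, f (bmul A x y) = bmul B (f x) (f y)) /\
  (forall x y, f (bimp A x y) = bimp B (f x) (f y)) /\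
  (forall x y, f (bmeet A x y) = bmeet B (f x) (f y)) /\
  (forall x y, f (bjoin A x y) = bjoin B (f x) (f y)) /\
  f (bzero A) = bzero B /\ f (bone A) = bone B.

From Stdlib Require Import Classical ClassicalEpsilon FunctionalExtensionality PropExtensionality ProofIrrelevance.

(* The new elements of the completion are the non-saturated cuts of A, each
   inserted as an idempotent into its own gap; a product or residuum involving
   a new element is computed as in the Goedel chain (minimum, and [x -> y] is
   [1] or [y]).  The BL axioms for mixed terms reduce to the cut axioms: the
   upper part of a cut is closed under products and absorbed by the lower part.
   A cut of the completion restricts to a cut of A, which is either saturated
   by an idempotent of A or is itself non-saturated and then filled by its new
   element.  The key observation for both saturation and the preservation of
   idempotent bounds is that the lower part of a non-saturated cut has no
   idempotent maximum and its upper part no idempotent minimum, so no new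
   element can sit immediately next to an idempotent of A. *)

Record total_order {T : Type} (le : T -> T -> Prop) : Prop := {
  order_refl : forall x, le x x;
  order_trans : forall x y z, le x y -> le y z -> le x z;
  order_antisym : forall x y, le x y -> le y x -> x = y;
  order_total : forall x y, le x y \/ le y x
}.

Section GodelChain.
Context {T : Type} (le : T -> T -> Prop).

Definition ord_min (x y : T) : T := if excluded_middle_informative (le x y) then x else y.
Definition ord_max (x y : T) : T := if excluded_middle_informative (le x y) then y else x.
Definition godel_imp (top x y : T) : T := if excluded_middle_informative (le x y) then top else y.

Lemma ord_min_cases x y : ord_min x y = x \/ ord_min x y = y.
Proof. unfold ord_min; destruct excluded_middle_informative; auto. Qed.

Hypothesis Hle : total_order le.
Let le_refl := order_refl le Hle.
Let le_trans := order_trans le Hle.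
Let le_antisym := order_antisym le Hle.

Let not_le_ge x y : ~ le x y -> le y x.
Proof. destruct (order_total le Hle x y); tauto. Qed.

Ltac order_cases :=
  unfold ord_min, ord_max, godel_imp in *;
  repeat match goal with
  | |- context [excluded_middle_informative ?P] =>
      let H := fresh in destruct (excluded_middle_informative P) as [H|H];
      [| pose proof (not_le_ge _ _ H)]
  | _ : context [excluded_middle_informative ?P] |- _ =>
      let H := fresh in destruct (excluded_middle_informative P) as [H|H];
      [| pose proof (not_le_ge _ _ H)]
  end;
  first [ reflexivity | tauto | solve [eauto using le_trans]
        | solve [apply le_antisym; eauto using le_trans]
        | exfalso; match goal with H : ~ le _ _ |- _ => solve [apply H; eauto using le_trans] end ].

Lemma ord_min_l x y : le x y -> ord_min x y = x.
Proof. intros; order_cases. Qed.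
Lemma ord_min_r x y : le y x -> ord_min x y = y.
Proof. intros; order_cases. Qed.
Lemma ord_max_l x y : le y x -> ord_max x y = x.
Proof. intros; order_cases. Qed.
Lemma ord_max_r x y : le x y -> ord_max x y = y.
Proof. intros; order_cases. Qed.
Lemma ord_min_eq_l x y : ord_min x y = x <-> le x y.
Proof. split; [|apply ord_min_l]. unfold ord_min; destruct excluded_middle_informative; auto.
  intros ->; apply le_refl. Qed.
Lemma ord_min_le_l x y : le (ord_min x y) x.
Proof. order_cases. Qed.
Lemma ord_min_le_r x y : le (ord_min x y) y.
Proof. order_cases. Qed.
Lemma ord_min_comm x y : ord_min x y = ord_min y x.
Proof. order_cases. Qed.
Lemma ord_min_assoc x y z : ord_min x (ord_min y z) = ord_min (ord_min x y) z.
Proof. order_cases. Qed.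
Lemma ord_max_comm x y : ord_max x y = ord_max y x.
Proof. order_cases. Qed.
Lemma ord_max_assoc x y z : ord_max x (ord_max y z) = ord_max (ord_max x y) z.
Proof. order_cases. Qed.
Lemma ord_min_max_absorb x y : ord_min x (ord_max x y) = x.
Proof. order_cases. Qed.
Lemma ord_max_min_absorb x y : ord_max x (ord_min x y) = x.
Proof. order_cases. Qed.

Variable top : T.
Hypothesis le_top : forall x, le x top.

Lemma godel_imp_residuation x y z : le (ord_min x y) z <-> le x (godel_imp top y z).
Proof. split; intros; order_cases. Qed.
Lemma godel_imp_prelinearity x y : ord_max (godel_imp top x y) (godel_imp top y x) = top.
Proof. order_cases. Qed.
End GodelChain.

Section BLOrder.
Context {A : BLAlgebra}.
Implicit Types x y z : A.

Lemma ble_refl x : ble A x x.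
Proof.
  unfold ble. pose proof (meet_absorb A x (bmeet A x x)) as Hx.
  rewrite join_absorb in Hx. exact Hx.
Qed.
Lemma ble_antisym x y : ble A x y -> ble A y x -> x = y.
Proof. unfold ble; intros Hxy Hyx. rewrite <- Hxy, meet_comm. exact Hyx. Qed.
Lemma ble_trans x y z : ble A x y -> ble A y z -> ble A x z.
Proof. unfold ble; intros Hxy Hyz. rewrite <- Hxy, <- meet_assoc, Hyz. reflexivity. Qed.
Lemma ble_one x : ble A x (bone A).
Proof. unfold ble; rewrite meet_comm; apply meet_one. Qed.
Lemma ble_zero x : ble A (bzero A) x.
Proof. apply meet_zero. Qed.

Lemma imp_eq_one x y : ble A x y -> bimp A x y = bone A.
Proof.
  intros Hxy. apply ble_antisym; [apply ble_one|].
  apply residuation. rewrite mul_comm, mul_one. exact Hxy.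
Qed.
Lemma ble_mul_r x y : ble A (bmul A x y) y.
Proof. apply residuation. rewrite imp_eq_one by apply ble_refl. apply ble_one. Qed.
Lemma ble_mul_l x y : ble A (bmul A x y) x.
Proof. rewrite mul_comm; apply ble_mul_r. Qed.
Lemma ble_imp x y : ble A y (bimp A x y).
Proof. apply residuation, ble_mul_l. Qed.

Lemma idempotent_zero : idempotent A (bzero A).
Proof. apply ble_antisym; [apply ble_mul_l | apply ble_zero]. Qed.
Lemma idempotent_one : idempotent A (bone A).
Proof. apply mul_one. Qed.

Lemma bmeet_r x y : ble A y x -> bmeet A x y = y.
Proof. intros H; rewrite meet_comm; exact H. Qed.
Lemma bjoin_r x y : ble A x y -> bjoin A x y = y.
Proof. intros H. rewrite join_comm, <- H, meet_comm. apply join_absorb. Qed.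
Lemma bjoin_l x y : ble A y x -> bjoin A x y = x.
Proof. rewrite join_comm; apply bjoin_r. Qed.
End BLOrder.

Section NonsaturatedCuts.
Variable A : BLAlgebra.

(* The parts of a non-saturated cut are disjoint, so the cut is determined by
   its lower part. *)
Definition nonsat_cut (X : A -> Prop) : Prop :=
  is_cut A X (fun a => ~ X a) /\ ~ saturated_cut A X (fun a => ~ X a).

Record nscut := { lower : A -> Prop; lower_nonsat : nonsat_cut lower }.
End NonsaturatedCuts.

Arguments lower {A}.
Arguments lower_nonsat {A}.

Section NonsaturatedCutFacts.
Context {A : BLAlgebra} (V : nscut A).

Lemma lower_le a b : lower V a -> ~ lower V b -> ble A a b.
Proof. destruct (lower_nonsat V) as [[_ [H _]] _]; eauto. Qed.
Lemma upper_mul_closed a b : ~ lower V a -> ~ lower V b -> ~ lower V (bmul A a b).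
Proof. destruct (lower_nonsat V) as [[_ [_ [H _]]] _]; eauto. Qed.
Lemma lower_mul_upper a b : lower V a -> ~ lower V b -> bmul A a b = a.
Proof. destruct (lower_nonsat V) as [[_ [_ [_ H]]] _]; eauto. Qed.

Lemma lower_down a b : lower V b -> ble A a b -> lower V a.
Proof.
  intros Vb Hab. apply NNPP; intro nVa.
  apply nVa. rewrite (ble_antisym a b Hab (lower_le b a Vb nVa)). exact Vb.
Qed.
Lemma upper_up a b : ~ lower V a -> ble A a b -> ~ lower V b.
Proof. intros nVa Hab Vb. apply nVa, (lower_down a b Vb Hab). Qed.

Lemma lower_no_idempotent_max u :
  idempotent A u -> lower V u -> ~ (forall a, lower V a -> ble A a u).
Proof.
  intros Hu Vu Hmax. apply (proj2 (lower_nonsat V)).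
  exists u; split; [exact Hu | split; [exact Hmax|]].
  intros b nVb; exact (lower_le u b Vu nVb).
Qed.
Lemma upper_no_idempotent_min u :
  idempotent A u -> ~ lower V u -> ~ (forall a, ~ lower V a -> ble A u a).
Proof.
  intros Hu nVu Hmin. apply (proj2 (lower_nonsat V)).
  exists u; split; [exact Hu | split; [|exact Hmin]].
  intros b Vb; exact (lower_le b u Vb nVu).
Qed.

Lemma lower_zero : lower V (bzero A).
Proof.
  apply NNPP; intro nV0. apply (upper_no_idempotent_min _ idempotent_zero nV0).
  intros; apply ble_zero.
Qed.
Lemma upper_one : ~ lower V (bone A).
Proof.
  intro V1. apply (lower_no_idempotent_max _ idempotent_one V1).
  intros; apply ble_one.
Qed.
End NonsaturatedCutFacts.

Lemma nscut_ext {A : BLAlgebra} (V W : nscut A) :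
  (forall a, lower V a <-> lower W a) -> V = W.
Proof.
  destruct V as [X HX], W as [Y HY]; simpl; intros HXY.
  assert (X = Y) as <- by (extensionality a; apply propositional_extensionality; auto).
  f_equal; apply proof_irrelevance.
Qed.

Section Completion.
Variable A : BLAlgebra.

Definition bar : Type := (A + nscut A)%type.

Definition bar_le (x y : bar) : Prop :=
  match x, y with
  | inl a, inl b => ble A a b
  | inl a, inr V => lower V a
  | inr V, inl b => ~ lower V b
  | inr V, inr W => forall a, lower V a -> lower W a
  end.

Hypothesis HA : is_chain A.

Lemma bar_le_total_order : total_order bar_le.
Proof.
  split.
  - intros [a|V]; simpl; auto using ble_refl.
  - intros [a|U] [b|V] [c|W]; simpl; intros Hxy Hyz.
    + exact (ble_trans a b c Hxy Hyz).
    + exact (lower_down W a b Hyz Hxy).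
    + exact (lower_le V a c Hxy Hyz).
    + auto.
    + exact (upper_up U b c Hxy Hyz).
    + intros d Ud. exact (lower_down W d b Hyz (lower_le U d b Ud Hxy)).
    + intros Uc. exact (Hyz (Hxy c Uc)).
    + auto.
  - intros [a|U] [b|V]; simpl; intros Hxy Hyx.
    + f_equal; exact (ble_antisym a b Hxy Hyx).
    + contradiction.
    + contradiction.
    + f_equal; apply nscut_ext; split; auto.
  - intros [a|U] [b|V]; simpl.
    + apply HA.
    + apply classic.
    + destruct (classic (lower U b)); auto.
    + destruct (classic (forall a, lower U a -> lower V a)) as [HUV|HUV]; [left; exact HUV|right].
      apply not_all_ex_not in HUV as [a HUV]. apply imply_to_and in HUV as [Ua nVa].
      intros c Vc. exact (lower_down U c a Ua (lower_le V c a Vc nVa)).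
Qed.

Let Hle := bar_le_total_order.

Local Notation bar_meet := (ord_min bar_le).
Local Notation bar_join := (ord_max bar_le).
Definition bar_zero : bar := inl (bzero A).
Definition bar_one : bar := inl (bone A).

Definition bar_mul (x y : bar) : bar :=
  match x, y with
  | inl a, inl b => inl (bmul A a b)
  | _, _ => bar_meet x y
  end.
Definition bar_imp (x y : bar) : bar :=
  match x, y with
  | inl a, inl b => inl (bimp A a b)
  | _, _ => godel_imp bar_le bar_one x y
  end.

Lemma bar_le_one x : bar_le x bar_one.
Proof. destruct x as [a|V]; simpl; [apply ble_one | apply upper_one]. Qed.
Lemma bar_zero_le x : bar_le bar_zero x.
Proof. destruct x as [a|V]; simpl; [apply ble_zero | apply lower_zero]. Qed.

Lemma bar_meet_inl a b : bar_meet (inl a) (inl b) = inl (bmeet A a b).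
Proof.
  destruct (HA a b) as [Hab|Hba].
  - rewrite (ord_min_l _ Hle (inl a) (inl b) Hab), Hab; reflexivity.
  - rewrite (ord_min_r _ Hle (inl a) (inl b) Hba), bmeet_r; auto.
Qed.
Lemma bar_join_inl a b : bar_join (inl a) (inl b) = inl (bjoin A a b).
Proof.
  destruct (HA a b) as [Hab|Hba].
  - rewrite (ord_max_r _ Hle (inl a) (inl b) Hab), bjoin_r; auto.
  - rewrite (ord_max_l _ Hle (inl a) (inl b) Hba), bjoin_l; auto.
Qed.

Lemma bar_mul_new_l V y : bar_mul (inr V) y = bar_meet (inr V) y.
Proof. reflexivity. Qed.
Lemma bar_mul_new_r x V : bar_mul x (inr V) = bar_meet x (inr V).
Proof. destruct x; reflexivity. Qed.
Lemma bar_imp_new_l V y : bar_imp (inr V) y = godel_imp bar_le bar_one (inr V) y.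
Proof. reflexivity. Qed.
Lemma bar_imp_new_r x V : bar_imp x (inr V) = godel_imp bar_le bar_one x (inr V).
Proof. destruct x; reflexivity. Qed.

Lemma bar_mul_comm x y : bar_mul x y = bar_mul y x.
Proof.
  destruct x as [a|U], y as [b|V]; simpl; [now rewrite mul_comm | ..];
    apply (ord_min_comm _ Hle).
Qed.
Lemma bar_mul_one x : bar_mul x bar_one = x.
Proof.
  destruct x as [a|V]; simpl; [now rewrite mul_one|].
  apply (ord_min_l _ Hle), bar_le_one.
Qed.

Lemma bar_mul_meet_new a b V :
  bar_mul (inl a) (bar_meet (inl b) (inr V)) = bar_meet (inl (bmul A a b)) (inr V).
Proof.
  destruct (classic (lower V b)) as [Vb|nVb].
  - assert (Vab : lower V (bmul A a b)) by exact (lower_down V _ b Vb (ble_mul_r a b)).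
    rewrite !(ord_min_l _ Hle); auto.
  - rewrite (ord_min_r _ Hle (inl b)) by exact nVb. simpl.
    destruct (classic (lower V a)) as [Va|nVa].
    + now rewrite (lower_mul_upper V a b Va nVb).
    + rewrite !(ord_min_r _ Hle); auto. exact (upper_mul_closed V a b nVa nVb).
Qed.

Lemma bar_mul_meet_news x U V :
  bar_mul x (bar_meet (inr U) (inr V)) = bar_meet x (bar_meet (inr U) (inr V)).
Proof. destruct (ord_min_cases bar_le (inr U) (inr V)) as [-> | ->]; apply bar_mul_new_r. Qed.

Lemma bar_mul_assoc x y z : bar_mul x (bar_mul y z) = bar_mul (bar_mul x y) z.
Proof.
  destruct x as [a|U], y as [b|V], z as [c|W].
  - simpl; now rewrite mul_assoc.
  - rewrite !bar_mul_new_r, bar_mul_meet_new. reflexivity.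
  - rewrite bar_mul_new_l, bar_mul_new_r, (ord_min_comm _ Hle (inr V)), bar_mul_meet_new.
    rewrite (bar_mul_comm _ (inl c)), bar_mul_meet_new, (mul_comm A c a). reflexivity.
  - rewrite bar_mul_new_l, bar_mul_meet_news, !bar_mul_new_r. apply (ord_min_assoc _ Hle).
  - rewrite !bar_mul_new_l, (ord_min_comm _ Hle (inr U) (inl b)).
    rewrite (bar_mul_comm (bar_meet (inl b) (inr U))), bar_mul_meet_new, (ord_min_comm _ Hle (inr U)).
    rewrite (mul_comm A c b). reflexivity.
  - rewrite !bar_mul_new_r, !bar_mul_new_l. apply (ord_min_assoc _ Hle).
  - rewrite !bar_mul_new_l, (bar_mul_comm _ (inl c)), bar_mul_meet_news.
    rewrite (ord_min_comm _ Hle (inl c)). apply (ord_min_assoc _ Hle).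
  - rewrite !bar_mul_new_l, bar_mul_new_r. apply (ord_min_assoc _ Hle).
Qed.

Lemma bar_residuation_new_old_old U b c :
  bar_le (bar_meet (inr U) (inl b)) (inl c) <-> bar_le (inr U) (inl (bimp A b c)).
Proof.
  simpl. destruct (classic (ble A b c)) as [Hbc|Hbc].
  - rewrite imp_eq_one by exact Hbc. split; [intros _; apply upper_one|intros _].
    exact (order_trans _ Hle _ (inl b) (inl c) (ord_min_le_r _ Hle _ _) Hbc).
  - split.
    + intros Hle_c. apply (upper_up U c); [|apply ble_imp].
      destruct (ord_min_cases bar_le (inr U) (inl b)) as [E|E]; rewrite E in Hle_c;
        [exact Hle_c | contradiction].
    + intros nUd. apply (order_trans _ Hle _ (inr U)); [exact (ord_min_le_l _ Hle _ _)|].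
      simpl; intros Uc. set (d := bimp A b c) in nUd.
      assert (Hdb : ble A (bmul A d b) c) by (apply residuation, ble_refl).
      destruct (classic (lower U b)) as [Ub|nUb].
      * apply Hbc. rewrite <- (lower_mul_upper U b d Ub nUd), mul_comm. exact Hdb.
      * exact (upper_mul_closed U d b nUd nUb (lower_down U _ c Uc Hdb)).
Qed.

Lemma bar_residuation_old_old_new a b W :
  bar_le (inl (bmul A a b)) (inr W) <-> bar_le (inl a) (godel_imp bar_le bar_one (inl b) (inr W)).
Proof.
  simpl. unfold godel_imp. destruct excluded_middle_informative as [Wb|nWb]; simpl in *.
  - split; [intros _; apply ble_one | intros _].
    exact (lower_down W _ b Wb (ble_mul_r a b)).
  - split.
    + intros Wab. apply NNPP; intro nWa. exact (upper_mul_closed W a b nWa nWb Wab).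
    + intros Wa. now rewrite (lower_mul_upper W a b Wa nWb).
Qed.

Lemma bar_residuation x y z : bar_le (bar_mul x y) z <-> bar_le x (bar_imp y z).
Proof.
  destruct x as [a|U], y as [b|V], z as [c|W];
    try solve [apply residuation | apply bar_residuation_old_old_new | apply bar_residuation_new_old_old];
    rewrite ?bar_mul_new_l, ?bar_mul_new_r, ?bar_imp_new_l, ?bar_imp_new_r;
    apply (godel_imp_residuation _ Hle), bar_le_one.
Qed.

Lemma bar_mul_godel_imp x y :
  bar_mul x y = bar_meet x y -> bar_mul x (godel_imp bar_le bar_one x y) = bar_meet x y.
Proof.
  intros Hxy. unfold godel_imp; destruct excluded_middle_informative as [Hle_xy|_]; [|exact Hxy].
  rewrite bar_mul_one. symmetry; exact (ord_min_l _ Hle _ _ Hle_xy).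
Qed.

Lemma bar_divisibility x y : bar_meet x y = bar_mul x (bar_imp x y).
Proof.
  destruct x as [a|U], y as [b|V].
  - rewrite bar_meet_inl, divisibility. reflexivity.
  - rewrite bar_imp_new_r, bar_mul_godel_imp; [reflexivity | apply bar_mul_new_r].
  - rewrite bar_imp_new_l, bar_mul_godel_imp; [reflexivity | apply bar_mul_new_l].
  - rewrite bar_imp_new_l, bar_mul_godel_imp; [reflexivity | apply bar_mul_new_l].
Qed.

Lemma bar_prelinearity x y : bar_join (bar_imp x y) (bar_imp y x) = bar_one.
Proof.
  destruct x as [a|U], y as [b|V];
    [simpl; rewrite bar_join_inl, prelinearity; reflexivity | ..];
    rewrite ?bar_imp_new_l, ?bar_imp_new_r;
    apply (godel_imp_prelinearity _ Hle), bar_le_one.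
Qed.

Lemma bar_meet_zero x : bar_meet bar_zero x = bar_zero.
Proof. apply (ord_min_l _ Hle), bar_zero_le. Qed.
Lemma bar_meet_one x : bar_meet bar_one x = x.
Proof. apply (ord_min_r _ Hle), bar_le_one. Qed.

Lemma bar_residuation_meet x y z :
  bar_meet (bar_mul x y) z = bar_mul x y <-> bar_meet x (bar_imp y z) = x.
Proof. rewrite !(ord_min_eq_l _ Hle). apply bar_residuation. Qed.

Definition Abar : BLAlgebra := {|
  car := bar; bmul := bar_mul; bimp := bar_imp; bmeet := bar_meet; bjoin := bar_join;
  bzero := bar_zero; bone := bar_one;
  meet_comm := ord_min_comm _ Hle; join_comm := ord_max_comm _ Hle;
  meet_assoc := ord_min_assoc _ Hle; join_assoc := ord_max_assoc _ Hle;
  meet_absorb := ord_min_max_absorb _ Hle; join_absorb := ord_max_min_absorb _ Hle;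
  meet_zero := bar_meet_zero; meet_one := bar_meet_one;
  mul_comm := bar_mul_comm; mul_assoc := bar_mul_assoc; mul_one := bar_mul_one;
  residuation := bar_residuation_meet; divisibility := bar_divisibility;
  prelinearity := bar_prelinearity |}.

Lemma ble_Abar (x y : Abar) : ble Abar x y <-> bar_le x y.
Proof. exact (ord_min_eq_l _ Hle x y). Qed.

Lemma Abar_chain : is_chain Abar.
Proof. intros x y. rewrite !ble_Abar. apply (order_total _ Hle). Qed.

Lemma Abar_embedding : BL_embedding A Abar inl.
Proof.
  repeat split; intros; simpl.
  - congruence.
  - symmetry; apply bar_meet_inl.
  - symmetry; apply bar_join_inl.
Qed.

Lemma Abar_new_idempotent (b : Abar) : (forall a : A, inl a <> b) -> idempotent Abar b.
Proof.
  destruct b as [a|V]; intros Hb; [now destruct (Hb a)|].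
  apply (ord_min_l _ Hle), (order_refl _ Hle).
Qed.

Lemma Abar_inf (C : A -> Prop) (m : A) : is_inf A C m -> idempotent A m ->
  is_inf Abar (fun b => exists c, C c /\ inl c = b) (inl m).
Proof.
  intros [Hlow Hgreat] Hm. split.
  - intros b [c [Cc <-]]. apply ble_Abar, Hlow, Cc.
  - intros l Hl. apply ble_Abar.
    assert (Hl' : forall c, C c -> bar_le l (inl c))
      by (intros c Cc; apply ble_Abar, Hl; exists c; auto).
    destruct l as [a|V]; simpl in *.
    + apply Hgreat; exact Hl'.
    + intros Vm. apply (lower_no_idempotent_max V m Hm Vm).
      intros z Vz. apply Hgreat. intros c Cc. exact (lower_le V z c Vz (Hl' c Cc)).
Qed.

Lemma Abar_sup (C : A -> Prop) (m : A) : is_sup A C m -> idempotent A m ->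
  is_sup Abar (fun b => exists c, C c /\ inl c = b) (inl m).
Proof.
  intros [Hup Hleast] Hm. split.
  - intros b [c [Cc <-]]. apply ble_Abar, Hup, Cc.
  - intros l Hl. apply ble_Abar.
    assert (Hl' : forall c, C c -> bar_le (inl c) l)
      by (intros c Cc; apply ble_Abar, Hl; exists c; auto).
    destruct l as [a|V]; simpl in *.
    + apply Hleast; exact Hl'.
    + apply NNPP; intros nVm. apply (upper_no_idempotent_min V m Hm nVm).
      intros z nVz. apply Hleast. intros c Cc. exact (lower_le V c z (Hl' c Cc) nVz).
Qed.

Section SaturationOfCut.
Variables X Y : Abar -> Prop.
Hypothesis HXY : is_cut Abar X Y.
Hypothesis X_Y_disjoint : forall x, X x -> Y x -> False.

Let Xold (a : A) : Prop := X (inl a).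

Let Y_compl x : ~ X x -> Y x.
Proof. destruct HXY as [Hcover _]; destruct (Hcover x); tauto. Qed.

Let X_le_Y x y : X x -> Y y -> bar_le x y.
Proof. destruct HXY as [_ [Hle_XY _]]; intros; apply ble_Abar; auto. Qed.

Let Xold_cut : is_cut A Xold (fun a => ~ Xold a).
Proof.
  destruct HXY as [_ [_ [Hmul_Y Habsorb]]]. split; [intros; apply classic|split; [|split]].
  - intros a b Xa nXb. exact (X_le_Y (inl a) (inl b) Xa (Y_compl _ nXb)).
  - intros a b nXa nXb Xab.
    exact (X_Y_disjoint _ Xab (Hmul_Y (inl a) (inl b) (Y_compl _ nXa) (Y_compl _ nXb))).
  - intros a b Xa nXb. injection (Habsorb (inl a) (inl b) Xa (Y_compl _ nXb)). auto.
Qed.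

Let new_in_X W : X (inr W) -> forall a, lower W a -> Xold a.
Proof. intros XW a Wa. apply NNPP; intros nXa. exact (X_le_Y _ (inl a) XW (Y_compl _ nXa) Wa). Qed.

Let new_in_Y W : Y (inr W) -> forall a, Xold a -> lower W a.
Proof. intros YW a Xa. exact (X_le_Y (inl a) _ Xa YW). Qed.

Let saturated_by_old u :
  idempotent A u -> (forall a, Xold a -> ble A a u) -> (forall a, ~ Xold a -> ble A u a) ->
  saturated_cut Abar X Y.
Proof.
  intros Hu Hbelow Habove. exists (inl u). split; [|split].
  - change (inl (bmul A u u) = (inl u : bar)). now rewrite Hu.
  - intros [b|W] Xx; apply ble_Abar; simpl; [now apply Hbelow|].
    intros Wu. apply (lower_no_idempotent_max W u Hu Wu).
    intros z Wz. exact (Hbelow z (new_in_X W Xx z Wz)).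
  - intros [b|W] Yy; apply ble_Abar; simpl.
    + apply Habove. intros Xb. exact (X_Y_disjoint _ Xb Yy).
    + apply NNPP; intros nWu. apply (upper_no_idempotent_min W u Hu nWu).
      intros z nWz. apply Habove. intros Xz. exact (nWz (new_in_Y W Yy z Xz)).
Qed.

Let saturated_by_new (Hns : ~ saturated_cut A Xold (fun a => ~ Xold a)) :
  saturated_cut Abar X Y.
Proof.
  set (V := {| lower := Xold; lower_nonsat := conj Xold_cut Hns |}).
  exists (inr V). split; [|split].
  - apply (ord_min_l _ Hle), (order_refl _ Hle).
  - intros [b|W] Xx; apply ble_Abar; simpl; [exact Xx | exact (new_in_X W Xx)].
  - intros [b|W] Yy; apply ble_Abar; simpl;
      [intros Xb; exact (X_Y_disjoint _ Xb Yy) | exact (new_in_Y W Yy)].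
Qed.

Lemma disjoint_cut_saturated : saturated_cut Abar X Y.
Proof.
  destruct (classic (saturated_cut A Xold (fun a => ~ Xold a))) as [[u [Hu [Hbelow Habove]]]|Hns].
  - exact (saturated_by_old u Hu Hbelow Habove).
  - exact (saturated_by_new Hns).
Qed.
End SaturationOfCut.

Lemma Abar_saturated : saturated Abar.
Proof.
  intros X Y HXY. destruct (classic (exists w, X w /\ Y w)) as [[w [Xw Yw]]|Hdisj].
  - destruct HXY as [_ [Hle_XY [_ Habsorb]]].
    exists w. split; [exact (Habsorb w w Xw Yw)|split; intros; auto].
  - apply disjoint_cut_saturated; [exact HXY|].
    intros x Xx Yx. apply Hdisj. eauto.
Qed.
End Completion.

Theorem mainTheorem9 (A : BLAlgebra) (HA : is_chain A) :
  exists (Abar : BLAlgebra) (f : A -> Abar),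
    is_chain Abar /\ saturated Abar /\ BL_embedding A Abar f /\
    (forall b : Abar, (forall a : A, f a <> b) -> idempotent Abar b) /\
    (forall (C : A -> Prop) (m : A), is_inf A C m -> idempotent A m ->
        is_inf Abar (fun b => exists c, C c /\ f c = b) (f m)) /\
    (forall (C : A -> Prop) (m : A), is_sup A C m -> idempotent A m ->
        is_sup Abar (fun b => exists c, C c /\ f c = b) (f m)).
Proof.
  exists (Abar A HA), inl.
  split; [apply Abar_chain|]. split; [apply Abar_saturated|].
  split; [apply Abar_embedding|]. split; [apply Abar_new_idempotent|].
  split; [apply Abar_inf | apply Abar_sup].
Qed.
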